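(* Let $F$ be a Banach lattice and $(f_n)\subset\mathrm{S}_F$ a quasi-disjoint sequence. Then $\overline{\mathrm{span}}\{f_n\}_{n\in\mathbb{N}}$ is anti-dispersed.
   Context: $\mathrm{S}_X$ is the unit sphere. Elements $x,y$ are disjoint if $|x|\wedge|y|=0$. $(f_n)\subset\mathrm{S}_F$ is quasi-disjoint if there is a disjoint sequence $(e_n)\subset\mathrm{S}_F$ with $\sum_n\|f_n-e_n\|<1$. A subspace $E$ is dispersed if it contains no almost disjoint sequence, i.e. no $(e_n)\subset\mathrm{S}_E$ for which there is a disjoint $(g_n)\subset F$ with $\|g_n-e_n\|\to0$. A closed subspace is anti-dispersed if it contains no infinite-dimensional closed dispersed subspace. *)

From HB Require Import structures.
From mathcomp Require Import all_boot all_order all_algebra.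
From mathcomp Require Import all_classical all_reals all_analysis.
Set Implicit Arguments. Unset Strict Implicit. Unset Printing Implicit Defensive.
Import Order.TTheory GRing.Theory Num.Theory.
Import numFieldNormedType.Exports.
Local Open Scope classical_set_scope.
Local Open Scope ring_scope.

Record BanachLattice (R : realType) (V : completeNormedModType R) := {
  bl_le : V -> V -> Prop;
  bl_join : V -> V -> V;
  bl_meet : V -> V -> V;
  bl_le_refl : forall x, bl_le x x;
  bl_le_anti : forall x y, bl_le x y -> bl_le y x -> x = y;
  bl_le_trans : forall x y z, bl_le x y -> bl_le y z -> bl_le x z;
  bl_le_add : forall x y z, bl_le x y -> bl_le (x + z) (y + z);
  bl_le_scale : forall (a : R) x y, 0 <= a -> bl_le x y -> bl_le (a *: x) (a *: y);
  bl_join_ubl : forall x y, bl_le x (bl_join x y);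
  bl_join_ubr : forall x y, bl_le y (bl_join x y);
  bl_join_lub : forall x y z, bl_le x z -> bl_le y z -> bl_le (bl_join x y) z;
  bl_meet_lbl : forall x y, bl_le (bl_meet x y) x;
  bl_meet_lbr : forall x y, bl_le (bl_meet x y) y;
  bl_meet_glb : forall x y z, bl_le z x -> bl_le z y -> bl_le z (bl_meet x y);
  bl_norm_mono : forall x y, bl_le (bl_join x (- x)) (bl_join y (- y)) ->
                             `|x| <= `|y|
}.
Arguments BanachLattice : clear implicits.

Section BL.
Context {R : realType} {V : completeNormedModType R} (L : BanachLattice R V).

Definition bl_abs (x : V) : V := bl_join L x (- x).

Definition bl_disjoint (x y : V) : Prop := bl_meet L (bl_abs x) (bl_abs y) = 0.

Definition disjoint_seq (g : nat -> V) : Prop :=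
  forall n m, n <> m -> bl_disjoint (g n) (g m).

Definition in_sphere (x : V) : Prop := `|x| = 1.

Definition quasi_disjoint (f : nat -> V) : Prop :=
  (forall n, in_sphere (f n)) /\
  exists e : nat -> V, (forall n, in_sphere (e n)) /\ disjoint_seq e /\
    ((\sum_(n <oo) (`|f n - e n|)%:E) < 1%:E)%E.

Definition closed_subspace (E : set V) : Prop :=
  E 0 /\ (forall x y, E x -> E y -> E (x + y)) /\
  (forall (a : R) x, E x -> E (a *: x)) /\ closed E.

Definition fin_span (s : seq V) : set V :=
  [set x | exists c : nat -> R, x = \sum_(i < size s) c i *: s`_i].

Definition infinite_dimensional (E : set V) : Prop :=
  forall s : seq V, ~ (E `<=` fin_span s).

Definition almost_disjoint_in (E : set V) (e : nat -> V) : Prop :=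
  (forall n, E (e n) /\ in_sphere (e n)) /\
  exists g : nat -> V, disjoint_seq g /\
    ((fun n => `|g n - e n|) @ \oo --> (0 : R)).

Definition dispersed (E : set V) : Prop :=
  ~ exists e : nat -> V, almost_disjoint_in E e.

Definition anti_dispersed (Y : set V) : Prop :=
  closed_subspace Y /\
  ~ exists Z : set V, [/\ Z `<=` Y, closed_subspace Z,
                          infinite_dimensional Z & dispersed Z].

Definition closed_span (f : nat -> V) : set V :=
  closure [set x | exists (n : nat) (c : nat -> R), x = \sum_(i < n) c i *: f i].

End BL.

From HB Require Import structures.
From mathcomp Require Import all_boot all_order all_algebra.
From mathcomp Require Import all_classical all_reals all_analysis.
From mathcomp Require Import ring lra.
Set Implicit Arguments. Unset Strict Implicit. Unset Printing Implicit Defensive.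
Import Order.TTheory GRing.Theory Num.Theory.
Import numFieldNormedType.Exports.
Local Open Scope classical_set_scope.
Local Open Scope ring_scope.

(* Let (e_n) be disjoint unit vectors with sum_n |f_n - e_n| <= dl < 1.
   1. Lattice facts: disjointness is stable under linear combinations, and
      |x| <= |x + y| for disjoint x, y; hence every coefficient of a
      combination of (e_n) is bounded by its norm.
   2. By perturbation, |a_j| <= (1 - dl)^-1 |sum_i a_i f_i|, so the
      coefficient maps are Lipschitz on the span of (f_n); their McShane
      extensions are coordinate functionals, linear on the closed span.
   3. An infinite-dimensional subspace Z of the closed span contains unit
      vectors killed by the first N coordinates; approximating such a vector
      by a combination of (f_n) and replacing the tail f_i by e_i shows it is
      close to an (e_n)-block supported beyond N.
   4. Choosing these blocks on successive intervals yields an almost disjoint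
      sequence in Z, so Z is not dispersed. *)

Section LatticeFacts.
Context {R : realType} {V : completeNormedModType R} (L : BanachLattice R V).
Local Notation le := (bl_le L).
Local Notation meet := (bl_meet L).
Local Notation ab := (bl_abs L).

Lemma leD x y z w : le x y -> le z w -> le (x + z) (y + w).
Proof.
move=> hxy hzw; apply: bl_le_trans (bl_le_add z hxy) _.
by rewrite ![y + _]addrC; apply: bl_le_add.
Qed.

Lemma le_subl x y z : le x (z + y) -> le (x - z) y.
Proof. by move=> h; have := bl_le_add (- z) h; rewrite addrAC subrr add0r. Qed.

Lemma le_of_subl0 x y : le (x - y) 0 -> le x y.
Proof. by move=> h; have := bl_le_add y h; rewrite subrK add0r. Qed.

Lemma le_of_sub_ge0 x y : le 0 (y - x) -> le x y.
Proof. by move=> h; have := bl_le_add x h; rewrite subrK add0r. Qed.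

Lemma le0Z (c : R) x : 0 <= c -> le 0 x -> le 0 (c *: x).
Proof. by move=> c0 /(bl_le_scale c0); rewrite scaler0. Qed.

Lemma ab_ge0 x : le 0 (ab x).
Proof.
have h2 : le 0 (ab x + ab x).
  by rewrite -(subrr x); apply: leD; [apply: bl_join_ubl|apply: bl_join_ubr].
have half : (2^-1 : R) + 2^-1 = 1 by field.
have := le0Z (c := 2^-1) _ h2; rewrite scalerDr -scalerDl half scale1r.
by apply; rewrite invr_ge0.
Qed.

Lemma abN x : ab (- x) = ab x.
Proof.
rewrite /bl_abs opprK.
by apply: bl_le_anti; apply: bl_join_lub;
  solve [apply: bl_join_ubl | apply: bl_join_ubr].
Qed.

Lemma ab_triangle x y : le (ab (x + y)) (ab x + ab y).
Proof.
apply: bl_join_lub; first by apply: leD; apply: bl_join_ubl.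
by rewrite opprD; apply: leD; apply: bl_join_ubr.
Qed.

Lemma abZ_le (c : R) x : le (ab (c *: x)) (`|c| *: ab x).
Proof.
have hpos (d : R) y : 0 <= d -> le (d *: y) (d *: ab y).
  by move=> d0; apply: bl_le_scale => //; apply: bl_join_ubl.
have hneg (d : R) y : 0 <= d -> le (d *: - y) (d *: ab y).
  by move=> d0; rewrite -(abN y); apply: hpos.
have [c0|c0] := leP 0 c.
  rewrite ger0_norm //; apply: bl_join_lub; first exact: hpos.
  by rewrite -scalerN; apply: hneg.
have nc0 : 0 <= - c by rewrite oppr_ge0 ltW.
rewrite ltr0_norm //; apply: bl_join_lub; last by rewrite -scaleNr; apply: hpos.
have -> : c *: x = (- c) *: - x by rewrite scalerN scaleNr opprK.
exact: hneg.
Qed.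

Lemma ab0 : ab 0 = 0.
Proof.
by apply: bl_le_anti; [have := abZ_le 0 0; rewrite normr0 !scale0r|apply: ab_ge0].
Qed.

Lemma meet0_le u v u' v' : le 0 u -> le 0 v -> le u u' -> le v v' ->
  meet u' v' = 0 -> meet u v = 0.
Proof.
move=> hu hv huu hvv h; apply: bl_le_anti; last exact: bl_meet_glb.
rewrite -h; apply: bl_meet_glb.
  exact: bl_le_trans (bl_meet_lbl L _ _) huu.
exact: bl_le_trans (bl_meet_lbr L _ _) hvv.
Qed.

Lemma meet0D u v w : le 0 u -> le 0 v -> le 0 w ->
  meet u v = 0 -> meet u w = 0 -> meet u (v + w) = 0.
Proof.
move=> hu hv hw huv huw; set t := meet u (v + w).
have ht0 : le 0 t by apply: bl_meet_glb => //; rewrite -[0]addr0; apply: leD.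
have htu : le t u := bl_meet_lbl L _ _.
(* t - v lies below both u and w, hence below their meet 0 *)
have htv : le (t - v) 0.
  rewrite -huw; apply: bl_meet_glb; last exact: le_subl (bl_meet_lbr L _ _).
  by apply: le_subl; rewrite -[t]add0r; apply: leD.
apply: bl_le_anti ht0; rewrite -huv.
by apply: bl_meet_glb => //; exact: le_of_subl0.
Qed.

Lemma meetC x y : meet x y = meet y x.
Proof. by apply: bl_le_anti; apply: bl_meet_glb; solve [apply: bl_meet_lbl|apply: bl_meet_lbr]. Qed.

Lemma meet0r u : le 0 u -> meet u 0 = 0.
Proof. by move=> hu; apply: bl_le_anti; [apply: bl_meet_lbr|apply: bl_meet_glb => //; apply: bl_le_refl]. Qed.

Lemma meet0_mulrn u v n : le 0 u -> le 0 v -> meet u v = 0 -> meet u (v *+ n) = 0.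
Proof.
move=> hu hv huv; elim: n => [|n IH]; first by rewrite mulr0n meet0r.
have hvn : le 0 (v *+ n) by rewrite -scaler_nat; apply: le0Z.
by rewrite mulrS; apply: meet0D.
Qed.

Lemma meet0_scale u v (c : R) : 0 <= c -> le 0 u -> le 0 v ->
  meet u v = 0 -> meet u (c *: v) = 0.
Proof.
move=> c0 hu hv huv; set n := (Num.truncn c).+1.
apply: (meet0_le hu (le0Z c0 hv) (bl_le_refl L u) _ (meet0_mulrn n hu hv huv)).
(* c *: v lies below n *: v, because (n - c) *: v is positive *)
apply: le_of_sub_ge0; rewrite -scaler_nat -scalerBl; apply: le0Z hv.
by rewrite subr_ge0 ltW // truncnS_gt.
Qed.

Lemma disjointC x y : bl_disjoint L x y -> bl_disjoint L y x.
Proof. by rewrite /bl_disjoint meetC. Qed.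

Lemma disjoint0 x : bl_disjoint L x 0.
Proof. by rewrite /bl_disjoint ab0 meet0r //; apply: ab_ge0. Qed.

Lemma disjointD x y z : bl_disjoint L x y -> bl_disjoint L x z ->
  bl_disjoint L x (y + z).
Proof.
move=> hxy hxz; apply: (meet0_le (ab_ge0 x) (ab_ge0 _) (bl_le_refl L _) (ab_triangle y z)).
by apply: meet0D => //; apply: ab_ge0.
Qed.

Lemma disjointZ x y (c : R) : bl_disjoint L x y -> bl_disjoint L x (c *: y).
Proof.
move=> hxy; apply: (meet0_le (ab_ge0 x) (ab_ge0 _) (bl_le_refl L _) (abZ_le c y)).
by apply: meet0_scale => //; apply: ab_ge0.
Qed.

Lemma disjoint_sum x (I : Type) (r : seq I) (P : pred I) (F : I -> V) :
  (forall i, P i -> bl_disjoint L x (F i)) ->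
  bl_disjoint L x (\sum_(i <- r | P i) F i).
Proof. by apply: big_ind; [apply: disjoint0|apply: disjointD]. Qed.

Lemma ab_le_disjointD x y : bl_disjoint L x y -> le (ab x) (ab (x + y)).
Proof.
move=> hxy; apply: le_of_subl0; rewrite -hxy; apply: bl_meet_glb.
  by apply: le_subl; rewrite -{1}[ab x]add0r; apply: leD; [apply: ab_ge0|apply: bl_le_refl].
apply: le_subl; rewrite -(abN y); apply: bl_le_trans (ab_triangle _ _).
by rewrite addrK; apply: bl_le_refl.
Qed.

Lemma norm_le_disjointD x y : bl_disjoint L x y -> `|x| <= `|x + y|.
Proof. by move=> hxy; apply: bl_norm_mono; apply: ab_le_disjointD. Qed.
End LatticeFacts.

Section DisjointSequence.
Context {R : realType} {V : completeNormedModType R} (L : BanachLattice R V).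
Context (e : nat -> V) (e_disj : disjoint_seq L e).

Lemma disjoint_supports (r s : seq nat) (a b : nat -> R) :
  (forall i j, i \in r -> j \in s -> i <> j) ->
  bl_disjoint L (\sum_(i <- r) a i *: e i) (\sum_(j <- s) b j *: e j).
Proof.
move=> hrs; rewrite !big_seq; apply: disjoint_sum => j hj; apply: disjointC.
apply: disjoint_sum => i hi; apply: disjointZ; apply: disjointC; apply: disjointZ.
exact: e_disj (hrs i j hi hj).
Qed.

(* Each coefficient is dominated by the norm, since a_j e_j is disjoint from
   the rest of the combination. *)
Lemma coef_le_norm (e_unit : forall n, in_sphere (e n)) n (a : nat -> R) j :
  (j < n)%N -> `|a j| <= `|\sum_(i < n) a i *: e i|.
Proof.
move=> hj; rewrite (bigD1 (Ordinal hj)) //=.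
have <- : `|a j *: e j| = `|a j| by rewrite normrZ e_unit mulr1.
apply: norm_le_disjointD; apply: disjoint_sum => i /= hij; apply: disjointZ.
apply: disjointC; apply: disjointZ; apply: e_disj => eij.
by move: hij; rewrite -val_eqE /= eij eqxx.
Qed.
End DisjointSequence.

Section ClosureApprox.
Context {R : realType} {V : normedModType R}.

Lemma closureP (S : set V) z :
  closure S z <-> (forall eps, 0 < eps -> exists2 s, S s & `|z - s| < eps).
Proof.
split=> [hz eps e0 | h].
  have [s [Ss bs]] := hz _ (nbhsx_ballx z eps e0).
  by exists s => //; move: bs; rewrite -ball_normE.
move=> B /nbhs_ballP [eps /= e0 sub]; have [s Ss hs] := h eps e0.
by exists s; split => //; apply: sub; rewrite -ball_normE.
Qed.

Lemma closureD (S : set V) : (forall x y, S x -> S y -> S (x + y)) ->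
  forall x y, closure S x -> closure S y -> closure S (x + y).
Proof.
move=> SD x y /closureP hx /closureP hy; apply/closureP => eps e0.
have e2 : 0 < eps / 2 by rewrite divr_gt0.
have [s Ss hs] := hx _ e2; have [t St ht] := hy _ e2.
exists (s + t); first exact: SD.
rewrite opprD addrACA; apply: le_lt_trans (ler_normD _ _) _.
by rewrite [eps]splitr ltrD.
Qed.

Lemma closureZ (S : set V) : (forall (c : R) x, S x -> S (c *: x)) ->
  forall (c : R) x, closure S x -> closure S (c *: x).
Proof.
move=> SZ c x /closureP hx; apply/closureP => eps e0.
have hc : 0 < `|c| + 1 by rewrite ltr_pwDr.
have [s Ss hs] := hx _ (divr_gt0 e0 hc).
exists (c *: s); first exact: SZ.
rewrite -scalerBr normrZ; apply: le_lt_trans (ler_wpM2l (normr_ge0 c) (ltW hs)) _.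
by rewrite mulrA ltr_pdivrMr // mulrDr mulr1 [eps * _]mulrC ltrDl.
Qed.

Lemma closure_lipschitz_eq0 (S : set V) (h : V -> R) (C : R) : 0 <= C ->
  (forall x y, `|h x - h y| <= C * `|x - y|) -> (forall x, S x -> h x = 0) ->
  forall z, closure S z -> h z = 0.
Proof.
move=> C0 hlip h0 z /closureP hz; apply/eqP; rewrite -normr_le0.
apply/ler_addgt0Pr => eps e0; rewrite add0r.
have hC : 0 < C + 1 by rewrite ltr_pwDr.
have [s Ss hs] := hz _ (divr_gt0 e0 hC).
rewrite -[h z]subr0 -(h0 s Ss); apply: le_trans (hlip z s) _.
apply: le_trans (ler_wpM2l C0 (ltW hs)) _.
by rewrite mulrA ler_pdivrMr // mulrDr mulr1 [eps * _]mulrC lerDl ltW.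
Qed.
End ClosureApprox.

Section McShane.
Context {R : realType} {V : normedModType R} {I : Type}.
Context (p : I -> V) (phi : I -> R) (C : R).
Hypotheses (C0 : 0 <= C) (phi_lip : forall i i', phi i - phi i' <= C * `|p i - p i'|).

Definition mcshane (z : V) : R := sup (range (fun i => phi i - C * `|z - p i|)).

Lemma mcshane_has_sup (i0 : I) z : has_sup (range (fun i => phi i - C * `|z - p i|)).
Proof.
split; first by exists (phi i0 - C * `|z - p i0|), i0.
exists (phi i0 + C * `|z - p i0|) => _ [i _ <-].
have htri : `|p i - p i0| <= `|z - p i| + `|z - p i0|.
  by rewrite -(distrC (p i) z); apply: ler_distD.
have := ler_wpM2l C0 htri; have := phi_lip i i0; rewrite mulrDr; lra.
Qed.

Lemma mcshane_ge i z : phi i - C * `|z - p i| <= mcshane z.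
Proof. by apply: ub_le_sup; [case: (mcshane_has_sup i z)|exists i]. Qed.

Lemma mcshane_le (i0 : I) z w : mcshane z <= mcshane w + C * `|z - w|.
Proof.
apply: ge_sup; first by case: (mcshane_has_sup i0 z).
move=> _ [i _ <-]; have := mcshane_ge i w.
have htri : `|w - p i| <= `|z - w| + `|z - p i|.
  by rewrite -(distrC w z); apply: ler_distD.
have := ler_wpM2l C0 htri; rewrite mulrDr; lra.
Qed.

Lemma mcshane_lipschitz (i0 : I) z w : `|mcshane z - mcshane w| <= C * `|z - w|.
Proof.
have := mcshane_le i0 z w; have := mcshane_le i0 w z; rewrite (distrC w z).
by rewrite ler_norml => h1 h2; apply/andP; split; lra.
Qed.

Lemma mcshane_eq i : mcshane (p i) = phi i.
Proof.
apply/eqP; rewrite eq_le; apply/andP; split; last first.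
  by have := mcshane_ge i (p i); rewrite subrr normr0 mulr0 subr0.
apply: ge_sup; first by case: (mcshane_has_sup i (p i)).
by move=> _ [i' _ <-]; have := phi_lip i' i; rewrite distrC; lra.
Qed.
End McShane.

Section KernelVector.
Context {R : realType} {V : completeNormedModType R}.

Lemma fin_span_cons (s : seq V) w z (c : R) :
  fin_span s (z + c *: w) -> fin_span (w :: s) z.
Proof.
move=> [d hd]; exists (fun i => if i is k.+1 then d k else - c).
rewrite /= big_ord_recl /=; under eq_bigr do rewrite add0n.
by rewrite -hd scaleNr addrCA addNr addr0.
Qed.

Lemma kernel_unit_vector (Z : set V) (phi : nat -> V -> R) N :
  Z 0 -> (forall x y, Z x -> Z y -> Z (x + y)) ->
  (forall (c : R) x, Z x -> Z (c *: x)) -> infinite_dimensional Z ->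
  (forall j (c : R) x y, Z x -> Z y -> phi j (x + c *: y) = phi j x + c * phi j y) ->
  exists z, [/\ Z z, `|z| = 1 & forall j, (j < N)%N -> phi j z = 0].
Proof.
move=> Z0 ZD ZZ Zinf phi_lin.
pose ker n := [set z | Z z /\ forall j, (j < n)%N -> phi j z = 0].
have ker_inf n : infinite_dimensional (ker n).
  elim: n => [|n IH] s hsub; first by apply: (Zinf s) => z Zz; apply: hsub.
  have [[w [[Zw wn] phiw]]|nonew] := EM (exists w, ker n w /\ phi n w != 0).
    (* project along w onto the kernel of phi n *)
    apply: (IH (w :: s)) => z [Zz zn]; set t := phi n z / phi n w.
    apply: (fin_span_cons (c := - t)); apply: hsub; split; first exact/ZD/ZZ.
    move=> j; rewrite ltnS leq_eqVlt phi_lin // => /orP[/eqP->|hj].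
      by rewrite /t mulNr divfK // subrr.
    by rewrite zn // wn // mulr0 addr0.
  (* otherwise phi n already vanishes on ker n *)
  apply: (IH s) => z [Zz zn]; apply: hsub; split => // j.
  rewrite ltnS leq_eqVlt => /orP[/eqP->|]; last exact: zn.
  by apply: contrapT => hz; apply: nonew; exists z; split => //; apply/eqP.
have phi0 j : phi j 0 = 0.
  by have := phi_lin j (-1) 0 0 Z0 Z0; rewrite scaler0 addr0 mulN1r subrr.
have /existsNP [z /not_implyP [[Zz zN] z_out]] := ker_inf N [::].
have z0 : z != 0 by apply: contra_notN z_out => /eqP->; exists (fun=> 0); rewrite big_ord0.
exists (`|z|^-1 *: z); split; first exact: ZZ.
  by rewrite normrZV // unitfE normr_eq0.
by move=> j hj; rewrite -[_ *: z]add0r phi_lin // phi0 zN // mulr0 addr0.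
Qed.
End KernelVector.

Section Combinations.
Context {R : realType} {V : completeNormedModType R}.

Definition combo (h : nat -> V) n (a : nat -> R) : V := \sum_(i < n) a i *: h i.
Definition restrict n (a : nat -> R) j : R := if (j < n)%N then a j else 0.

Lemma combo_widen h n m a : (n <= m)%N -> combo h n a = combo h m (restrict n a).
Proof.
move=> hnm; rewrite /combo /restrict (big_ord_widen m (fun i => a i *: h i) hnm).
by rewrite big_mkcond; apply: eq_bigr => i _; case: ifP; rewrite ?scale0r.
Qed.

Lemma combo_add h n a b : combo h n a + combo h n b = combo h n (fun i => a i + b i).
Proof. by rewrite /combo -big_split; apply: eq_bigr => i _; rewrite scalerDl. Qed.

Lemma combo_scale h n a (c : R) : c *: combo h n a = combo h n (fun i => c * a i).
Proof. by rewrite /combo scaler_sumr; apply: eq_bigr => i _; rewrite scalerA. Qed.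

Lemma combo_sub h n a b : combo h n a - combo h n b = combo h n (fun i => a i - b i).
Proof. by rewrite /combo -sumrB; apply: eq_bigr => i _; rewrite scalerBl. Qed.

Lemma restrict_combine n m M a b (c : R) j : (n <= M)%N -> (m <= M)%N ->
  restrict M (fun i => restrict n a i + c * restrict m b i) j =
  restrict n a j + c * restrict m b j.
Proof.
move=> hn hm; rewrite {1}/restrict; case: (ltnP j M) => // hj.
by rewrite /restrict !ltnNge (leq_trans hn hj) (leq_trans hm hj) /= mulr0 addr0.
Qed.

Definition span_set (h : nat -> V) : set V := [set x | exists n a, x = combo h n a].

Lemma span_setD h x y : span_set h x -> span_set h y -> span_set h (x + y).
Proof.
move=> [n [a ->]] [m [b ->]]; exists (maxn n m), (fun i => restrict n a i + restrict m b i).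
by rewrite (combo_widen h a (leq_maxl n m)) (combo_widen h b (leq_maxr n m)) combo_add.
Qed.

Lemma span_setZ h (c : R) x : span_set h x -> span_set h (c *: x).
Proof. by move=> [n [a ->]]; exists n, (fun i => c * a i); rewrite combo_scale. Qed.

Lemma closed_span_subspace (h : nat -> V) : closed_subspace (closed_span h).
Proof.
split; first by apply: subset_closure; exists 0%N, (fun=> 0); rewrite /combo big_ord0.
split; first exact: (closureD (@span_setD h)).
by split; [exact: (closureZ (@span_setZ h))|exact: closed_closure].
Qed.
End Combinations.

Lemma dist_defect {R : realType} (p q k r s l : R) :
  `|(p - (q + k)) - (r - (s + l))| <= `|p - r| + (`|q - s| + `|k - l|).
Proof.
have -> : p - (q + k) - (r - (s + l)) = (p - r) - ((q - s) + (k - l)) by ring.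
by apply: le_trans (ler_normB _ _) _; rewrite lerD2l ler_normD.
Qed.

Section Perturbation.
Context {R : realType} {V : completeNormedModType R} (L : BanachLattice R V).
Context (f e : nat -> V) (dl : R).
Hypotheses (f_unit : forall n, in_sphere (f n)) (e_unit : forall n, in_sphere (e n)).
Hypotheses (e_disj : disjoint_seq L e) (dl_lt1 : dl < 1).
Hypothesis dl_bound : forall n, \sum_(i < n) `|f i - e i| <= dl.

Definition basis_const : R := (1 - dl)^-1.

Lemma basis_const_gt0 : 0 < basis_const.
Proof. by rewrite invr_gt0 subr_gt0. Qed.

(* The combination of (e_i) with the same coefficients differs from that of
   (f_i) by at most dl times its norm. *)
Lemma coef_bound n a j : (j < n)%N -> `|a j| <= basis_const * `|combo f n a|.
Proof.
move=> hj; set x := combo f n a; set y := combo e n a.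
have hy i : (i < n)%N -> `|a i| <= `|y| by move=> hi; exact: (coef_le_norm e_disj e_unit a hi).
have hxy : `|x - y| <= `|y| * dl.
  rewrite /x /y /combo -sumrB; under eq_bigr do rewrite -scalerBr.
  apply: le_trans (ler_norm_sum _ _ _) _.
  apply: (@le_trans _ _ (\sum_(i < n) `|y| * `|f i - e i|)).
    by apply: ler_sum => i _; rewrite normrZ ler_wpM2r // hy.
  by rewrite -mulr_sumr ler_wpM2l.
have hyx : `|y| <= `|x| + `|y| * dl.
  have := ler_normB x (x - y); rewrite opprB addrCA subrr addr0 => h.
  by apply: le_trans h _; rewrite lerD2l.
have hyL : `|y| <= basis_const * `|x|.
  by rewrite /basis_const mulrC ler_pdivlMr ?subr_gt0 // mulrBr mulr1; lra.
exact: le_trans (hy j hj) hyL.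
Qed.

Lemma restrict_lipschitz j (na mb : nat * (nat -> R)) :
  restrict na.1 na.2 j - restrict mb.1 mb.2 j <=
  basis_const * `|combo f na.1 na.2 - combo f mb.1 mb.2|.
Proof.
case: na mb => [n a] [m b] /=; set M := maxn n m.
have hn : (n <= M)%N := leq_maxl n m; have hm : (m <= M)%N := leq_maxr n m.
have [hj|hj] := ltnP j M.
  rewrite (combo_widen f a hn) (combo_widen f b hm) combo_sub.
  exact: le_trans (ler_norm _) (coef_bound _ hj).
rewrite /restrict !ltnNge (leq_trans hn hj) (leq_trans hm hj) /= subrr.
by rewrite mulr_ge0 // ltW // basis_const_gt0.
Qed.

Definition coord j : V -> R :=
  mcshane (fun na : nat * (nat -> R) => combo f na.1 na.2)
    (fun na => restrict na.1 na.2 j) basis_const.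

Lemma coord_lipschitz j z w : `|coord j z - coord j w| <= basis_const * `|z - w|.
Proof.
exact: (mcshane_lipschitz (ltW basis_const_gt0) (@restrict_lipschitz j) (0%N, fun=> 0)).
Qed.

Lemma coord_combo j n a : coord j (combo f n a) = restrict n a j.
Proof. exact: (mcshane_eq (ltW basis_const_gt0) (@restrict_lipschitz j) (n, a)). Qed.

Lemma coord_linear_span j (c : R) n a m b :
  coord j (combo f n a + c *: combo f m b) =
  coord j (combo f n a) + c * coord j (combo f m b).
Proof.
set M := maxn n m.
have hn : (n <= M)%N := leq_maxl n m; have hm : (m <= M)%N := leq_maxr n m.
rewrite !coord_combo (combo_widen f a hn) (combo_widen f b hm).
by rewrite combo_scale combo_add coord_combo restrict_combine.
Qed.

(* Linearity passes from the span to its closure by Lipschitz continuity,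
   one variable at a time. *)
Lemma coord_linear j (c : R) z w : closed_span f z -> closed_span f w ->
  coord j (z + c *: w) = coord j z + c * coord j w.
Proof.
move=> hz hw.
pose defect z w := coord j (z + c *: w) - (coord j z + c * coord j w).
suff : defect z w = 0 by move/eqP; rewrite subr_eq0 => /eqP.
have hL := ltW basis_const_gt0.
have defect_span_r w' : span_set f w' -> forall z', closed_span f z' -> defect z' w' = 0.
  move=> [m [b ->]]; apply: (closure_lipschitz_eq0 (C := basis_const * 2)).
  - by rewrite mulr_ge0.
  - move=> x y; apply: le_trans (dist_defect _ _ _ _ _ _) _.
    have := coord_lipschitz j (x + c *: combo f m b) (y + c *: combo f m b).
    have := coord_lipschitz j x y.
    rewrite opprD addrACA subrr addr0 subrr normr0; lra.
  - by move=> _ [n [a ->]]; rewrite /defect coord_linear_span subrr.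
apply: (closure_lipschitz_eq0 (C := basis_const * `|c| * 2) _ _ _ hw).
- by rewrite !mulr_ge0.
- move=> x y; apply: le_trans (dist_defect _ _ _ _ _ _) _.
  have := coord_lipschitz j (z + c *: x) (z + c *: y).
  have := coord_lipschitz j x y.
  rewrite opprD addrACA subrr add0r -scalerBr normrZ subrr normr0 -mulrBr normrM.
  move=> h1 h2; have := ler_wpM2l (normr_ge0 c) h1; nra.
- by move=> x hx; apply: defect_span_r.
Qed.

Lemma restrict_bound n a j : `|restrict n a j| <= basis_const * `|combo f n a|.
Proof.
rewrite /restrict; case: ifP => hj; first exact: coef_bound.
by rewrite normr0 mulr_ge0 // ltW // basis_const_gt0.
Qed.

Lemma tail_small tau Nmin : 0 < tau -> exists2 N, (Nmin <= N)%N &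
  forall K, (N <= K)%N -> \sum_(N <= i < K) `|f i - e i| <= tau.
Proof.
move=> tau0; pose d i := `|f i - e i|.
have split_sum m n : (m <= n)%N ->
    \sum_(i < n) d i = \sum_(i < m) d i + \sum_(m <= i < n) d i.
  move=> hmn; have := @big_cat_nat R 0 +%R m 0 n xpredT d (leq0n m) hmn.
  by rewrite !big_mkord.
set E := range (fun n => \sum_(i < n) d i).
have hE : has_sup E.
  by split; [exists (\sum_(i < 0) d i), 0%N|exists dl => _ [n _ <-]; apply: dl_bound].
have [_ [N0 _ <-] hN0] := sup_adherent tau0 hE.
exists (maxn N0 Nmin); first exact: leq_maxr.
move=> K hK; have hsupK : \sum_(i < K) d i <= sup E.
  by apply: ub_le_sup; [case: hE|exists K].
have := split_sum _ _ hK; have := split_sum _ _ (leq_maxl N0 Nmin).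
have : 0 <= \sum_(N0 <= i < maxn N0 Nmin) d i by apply: sumr_ge0 => i _; apply: normr_ge0.
lra.
Qed.

Lemma head_tail_estimate K N a A : (N <= K)%N -> (forall i, `|a i| <= A) ->
  `|combo f K a - \sum_(N <= i < K) a i *: e i| <=
  \sum_(i < N) `|a i| + A * \sum_(N <= i < K) `|f i - e i|.
Proof.
move=> hNK hA.
have := @big_cat_nat V 0 +%R N 0 K xpredT (fun i => a i *: f i) (leq0n N) hNK.
rewrite !big_mkord /combo => ->.
rewrite -addrA -sumrB; apply: le_trans (ler_normD _ _) _; apply: lerD.
  apply: le_trans (ler_norm_sum _ _ _) _.
  by apply: ler_sum => i _; rewrite normrZ f_unit mulr1.
apply: le_trans (ler_norm_sum _ _ _) _; rewrite mulr_sumr.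
by apply: ler_sum => i _; rewrite -scalerBr normrZ ler_wpM2r.
Qed.

(* A unit vector in the kernel of the first N coordinates, eta-close to a
   combination of (f_i), is close to the (e_i)-block of that combination on
   [N, K): the head coefficients are at most basis_const * eta, the others at
   most 2 * basis_const. *)
Lemma kernel_vector_near_block z N K0 K a0 eta : (K0 <= K)%N -> (N <= K)%N ->
  `|z| = 1 -> (forall j, (j < N)%N -> coord j z = 0) ->
  `|z - combo f K0 a0| < eta -> eta <= 1 ->
  `|z - \sum_(N <= i < K) restrict K0 a0 i *: e i| <=
  eta * (1 + N%:R * basis_const) + 2 * basis_const * \sum_(N <= i < K) `|f i - e i|.
Proof.
move=> hK0K hNK z1 zN hza eta1; set a := restrict K0 a0; set Lc := basis_const.
have hL : 0 <= Lc := ltW basis_const_gt0.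
have head j : (j < N)%N -> `|a j| <= Lc * eta.
  move=> hj; rewrite /a -coord_combo -[coord j _]subr0 -(zN j hj) distrC.
  by apply: le_trans (coord_lipschitz _ _ _) _; rewrite ler_wpM2l // ltW.
have all_coef i : `|a i| <= 2 * Lc.
  apply: le_trans (restrict_bound _ _ _) _; rewrite mulrC ler_wpM2r //.
  by have := ler_distD z 0 (combo f K0 a0); rewrite !sub0r !normrN z1; lra.
have hhead : \sum_(i < N) `|a i| <= N%:R * (Lc * eta).
  have <- : \sum_(i < N) (Lc * eta) = N%:R * (Lc * eta).
    by rewrite sumr_const card_ord mulr_natl.
  by apply: ler_sum => i _; apply: head.
have hest := head_tail_estimate hNK all_coef.
rewrite (combo_widen f a0 hK0K) -/a in hza.
apply: le_trans (ler_distD (combo f K a) _ _) _.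
have : eta * (1 + N%:R * Lc) = eta + N%:R * (Lc * eta) by ring.
lra.
Qed.

Lemma block_approx (Z : set V) : Z 0 -> (forall x y, Z x -> Z y -> Z (x + y)) ->
  (forall (c : R) x, Z x -> Z (c *: x)) -> Z `<=` closed_span f ->
  infinite_dimensional Z -> forall Nmin k : nat, exists N K z (a : nat -> R),
  [/\ (Nmin <= N)%N, (N <= K)%N, Z z, in_sphere z &
      `|z - \sum_(N <= i < K) a i *: e i| <= k.+1%:R^-1].
Proof.
move=> Z0 ZD ZZ ZS Zinf Nmin k; set eps : R := k.+1%:R^-1.
have hL := basis_const_gt0; set Lc := basis_const in hL *.
have div_le (x d : R) : 0 <= x -> 1 <= d -> x / d <= x.
  by move=> x0 d1; rewrite ler_pdivrMr ?(lt_le_trans ltr01) // ler_peMr.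
(* choose the tail length N for tau, then the approximation precision eta *)
have hLc2 : 1 <= 1 + 2 * Lc by rewrite lerDl mulr_ge0 // ltW.
set tau := eps / (1 + 2 * Lc).
have tau0 : 0 < tau by rewrite divr_gt0 ?invr_gt0 // (lt_le_trans ltr01).
have [N hN htail] := tail_small Nmin tau0.
have coord_lin j (c : R) x y : Z x -> Z y -> coord j (x + c *: y) = coord j x + c * coord j y.
  by move=> Zx Zy; apply: coord_linear; apply: ZS.
have [z [Zz z1 zN]] := kernel_unit_vector N Z0 ZD ZZ Zinf coord_lin.
have hNL : 1 <= 1 + N%:R * Lc by rewrite lerDl mulr_ge0 // ltW.
set eta := tau / (1 + N%:R * Lc).
have eta0 : 0 < eta by rewrite divr_gt0 // (lt_le_trans ltr01).
have eta1 : eta <= 1.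
  apply: le_trans (div_le _ _ (ltW tau0) hNL) _.
  by apply: le_trans (div_le _ _ _ hLc2) _; rewrite ?invr_ge0 // invf_le1 // ler1n.
have [_ [K0 [a0 ->]] hza] := iffLR (closureP _ _) (ZS _ Zz) _ eta0.
exists N, (maxn K0 N), z, (restrict K0 a0); split => //; first exact: leq_maxr.
have hK0 := leq_maxl K0 N; have hNK := leq_maxr K0 N.
apply: le_trans (kernel_vector_near_block hK0 hNK z1 zN hza eta1) _.
have := ler_wpM2l (ltW (mulr_gt0 (ltr0Sn R 1) hL)) (htail _ hNK).
rewrite -/Lc divfK ?gt_eqF ?(lt_le_trans ltr01) //.
have : tau * (1 + 2 * Lc) = eps by rewrite divfK // gt_eqF // (lt_le_trans ltr01).
have : tau * (1 + 2 * Lc) = tau + 2 * Lc * tau by ring.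
lra.
Qed.
End Perturbation.

Section BlockSelection.
Context {R : realType} {V : completeNormedModType R} (L : BanachLattice R V).
Context (e : nat -> V) (e_disj : disjoint_seq L e).

Lemma almost_disjoint_of_blocks (Z : set V) :
  (forall Nmin k : nat, exists N K z (a : nat -> R),
     [/\ (Nmin <= N)%N, (N <= K)%N, Z z, in_sphere z &
         `|z - \sum_(N <= i < K) a i *: e i| <= k.+1%:R^-1]) ->
  exists u, almost_disjoint_in L Z u.
Proof.
move=> hblock.
have /choice [F hF] : forall p : nat * nat, exists y : nat * nat * V * (nat -> R),
  [/\ (p.1 <= y.1.1.1)%N, (y.1.1.1 <= y.1.1.2)%N, Z y.1.2, in_sphere y.1.2 &
      `|y.1.2 - \sum_(y.1.1.1 <= i < y.1.1.2) y.2 i *: e i| <= p.2.+1%:R^-1].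
  by move=> [Nmin k]; have [N [K [z [a H]]]] := hblock Nmin k; exists (N, K, z, a).
(* the k-th block starts after the end B k of the previous ones *)
pose B := fix B k := if k is k'.+1 then (F (B k', k')).1.1.2 else 0%N.
pose Nk k := (F (B k, k)).1.1.1; pose Kk k := (F (B k, k)).1.1.2.
pose zk k := (F (B k, k)).1.2.
pose gk k := \sum_(Nk k <= i < Kk k) (F (B k, k)).2 i *: e i.
have hP k : [/\ (B k <= Nk k)%N, (Nk k <= Kk k)%N, Z (zk k), in_sphere (zk k) &
   `|zk k - gk k| <= k.+1%:R^-1] by exact: (hF (B k, k)).
have hB k m : (k < m)%N -> (Kk k <= B m)%N.
  elim: m => // m IH; rewrite ltnS leq_eqVlt => /orP[/eqP->|hkm] //=.
  have [h1 h2 _ _ _] := hP m.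
  by apply: leq_trans (IH hkm) (leq_trans h1 h2).
have hdisj n m : (n < m)%N -> bl_disjoint L (gk n) (gk m).
  move=> hnm; apply: disjoint_supports => // i j.
  rewrite !mem_index_iota => /andP[_ hi] /andP[hj _] eij; move: hi; rewrite eij.
  have [hBN _ _ _ _] := hP m.
  by rewrite ltnNge (leq_trans (hB _ _ hnm) (leq_trans hBN hj)).
exists zk; split; first by move=> n; have [_ _ ? ? _] := hP n.
exists gk; split.
  move=> n m hnm; have [h|h|h] := ltngtP n m; first exact: hdisj.
    by apply: disjointC; apply: hdisj.
  by move: hnm; rewrite h.
apply: (@squeeze_cvgr _ _ _ _ (cst 0) harmonic); last 2 first.
- exact: cvg_cst.
- exact: cvg_harmonic.
apply: nearW => k /=; rewrite normr_ge0 distrC /=.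
by have [_ _ _ _ ->] := hP k.
Qed.
End BlockSelection.

Lemma partial_sums_lt1 {R : realType} (u : nat -> R) : (forall n, 0 <= u n) ->
  (\sum_(n <oo) (u n)%:E < 1%:E)%E -> exists2 dl : R, dl < 1 & forall n, \sum_(i < n) u i <= dl.
Proof.
move=> u0; set S := (\sum_(n <oo) (u n)%:E)%E => S1.
have hpart n : ((\sum_(i < n) u i)%:E <= S)%E.
  rewrite -sumEFin -(big_mkord xpredT (fun i => (u i)%:E)).
  by apply: nneseries_lim_ge => i _; rewrite lee_fin.
have Sfin : S \is a fin_num.
  by rewrite ge0_fin_numE ?(lt_trans S1) ?ltey // (le_trans _ (hpart 0%N)) // big_ord0.
by exists (fine S) => [|n]; rewrite -?lte_fin -?lee_fin fineK.
Qed.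

Theorem proposition4p12 (R : realType) (V : completeNormedModType R)
  (L : BanachLattice R V) (f : nat -> V) :
  quasi_disjoint L f -> anti_dispersed L (closed_span f).
Proof.
move=> [f_unit [e [e_unit [e_disj hsum]]]].
split; first exact: closed_span_subspace.
move=> [Z [ZS [Z0 [ZD [ZZ _]]] Zinf Zdisp]]; apply: Zdisp.
have [dl dl_lt1 dl_bound] := partial_sums_lt1 (fun n => normr_ge0 (f n - e n)) hsum.
apply: (almost_disjoint_of_blocks e_disj).
exact: (block_approx f_unit e_unit e_disj dl_lt1 dl_bound Z0 ZD ZZ ZS Zinf).
Qed.
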